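(* Let $X,Y,Z$ be countable discrete metric spaces of bounded geometry, $d_{XY}\in D(X,Y)$, $d_{YZ}\in D(Y,Z)$. Then $M_{d_{XY}}(X,Y)\hat\otimes M_{d_{YZ}}(Y,Z)=M_{d_{YZ}\circ d_{XY}}(X,Z)$.
   Context: A discrete metric space $X$ has bounded geometry if for every $R>0$ the cardinalities $|B_R(x)|$ of balls of radius $R$ are finite and bounded uniformly in $x\in X$. $H_X=l^2(X)$ with basis $\{\delta_x\}$; for $T:H_X\to H_Y$ bounded, $T_{yx}=\langle T\delta_x,\delta_y\rangle$; $T$ has propagation less than $L$ w.r.t. $\rho$ if $T_{yx}=0$ whenever $\rho(x,y)\ge L$. $M_\rho(X,Y)$ is the norm closure in $\mathbb B(H_X,H_Y)$ of bounded operators of finite propagation w.r.t. $\rho$. $D(X,Y)$ is the set of metrics on $X\sqcup Y$ restricting to $d_X,d_Y$. $(d_{YZ}\circ d_{XY})$ is the metric on $X\sqcup Z$ equal to $d_X$, $d_Z$ on $X$, $Z$ and $(d_{YZ}\circ d_{XY})(x,z)=\inf_{y\in Y}(d_{XY}(x,y)+d_{YZ}(y,z))$. For closed subspaces $M\subset\mathbb B(H_X,H_Y)$, $N\subset\mathbb B(H_Y,H_Z)$, $M\hat\otimes N$ denotes the norm closure in $\mathbb B(H_X,H_Z)$ of the linear span of all $S\circ T$ with $T\in M$, $S\in N$. *)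

From Stdlib Require Import Reals List Classical ClassicalEpsilon.
Open Scope R_scope.

Definition C : Type := (R * R)%type.
Definition C0 : C := (0, 0).
Definition C1 : C := (1, 0).
Definition Cadd (a b : C) : C := (fst a + fst b, snd a + snd b).
Definition Copp (a : C) : C := (- fst a, - snd a).
Definition Cmul (a b : C) : C :=
  (fst a * fst b - snd a * snd b, fst a * snd b + snd a * fst b).
Definition Cnorm2 (a : C) : R := fst a * fst a + snd a * snd a.

Definition Rsup (E : R -> Prop) : R := epsilon (inhabits 0) (is_lub E).
Definition is_glb (E : R -> Prop) (m : R) : Prop :=
  (forall r, E r -> m <= r) /\ (forall b, (forall r, E r -> b <= r) -> b <= m).
Definition Rinf (E : R -> Prop) : R := epsilon (inhabits 0) (is_glb E).

Definition IsMetric {T : Type} (d : T -> T -> R) : Prop :=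
  (forall x y, 0 <= d x y) /\
  (forall x y, d x y = 0 <-> x = y) /\
  (forall x y, d x y = d y x) /\
  (forall x y z, d x z <= d x y + d y z).

Definition CountableT (T : Type) : Prop :=
  exists f : T -> nat, forall x y, f x = f y -> x = y.

Definition DiscreteMetric {T : Type} (d : T -> T -> R) : Prop :=
  forall x, exists r, 0 < r /\ forall y, d x y < r -> y = x.

(** bounded geometry: for every R > 0 the balls B_R(x) are finite with
    cardinality bounded uniformly in x (every duplicate-free list of points
    of B_R(x) has length <= N). *)
Definition BoundedGeometry {T : Type} (d : T -> T -> R) : Prop :=
  forall r, 0 < r -> exists N : nat, forall (x : T) (l : list T),
    NoDup l -> (forall y, In y l -> d x y <= r) -> (length l <= N)%nat.

Definition CountableDiscreteBG {T : Type} (d : T -> T -> R) : Prop :=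
  IsMetric d /\ CountableT T /\ DiscreteMetric d /\ BoundedGeometry d.

Definition InD {X Y : Type} (dX : X -> X -> R) (dY : Y -> Y -> R)
  (rho : (X + Y) -> (X + Y) -> R) : Prop :=
  IsMetric rho /\
  (forall a b, rho (inl a) (inl b) = dX a b) /\
  (forall a b, rho (inr a) (inr b) = dY a b).

Definition comp_metric {X Y Z : Type} (dX : X -> X -> R) (dZ : Z -> Z -> R)
  (dXY : (X + Y) -> (X + Y) -> R) (dYZ : (Y + Z) -> (Y + Z) -> R)
  : (X + Z) -> (X + Z) -> R :=
  fun u v =>
    match u, v with
    | inl a, inl b => dX a b
    | inr a, inr b => dZ a b
    | inl x, inr z
    | inr z, inl x =>
        Rinf (fun r => exists y : Y, r = dXY (inl x) (inr y) + dYZ (inl y) (inr z))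
    end.

Definition psum {T : Type} (f : T -> C) (l : list T) : R :=
  fold_right (fun x acc => Cnorm2 (f x) + acc) 0 l.

Definition InL2 {T : Type} (f : T -> C) : Prop :=
  exists B, forall l, NoDup l -> psum f l <= B.

(** squared l^2 norm *)
Definition norm2 {T : Type} (f : T -> C) : R :=
  Rsup (fun s => exists l, NoDup l /\ s = psum f l).

Definition delta {T : Type} (x : T) : T -> C :=
  fun y => if excluded_middle_informative (x = y) then C1 else C0.

(** * Operators H_X -> H_Y (only their values on l^2 vectors matter) *)
Definition Op (X Y : Type) : Type := (X -> C) -> (Y -> C).

Definition BoundedOp {X Y : Type} (T : Op X Y) : Prop :=
  (forall f, InL2 f -> InL2 (T f)) /\
  (forall f g, InL2 f -> InL2 g ->
     forall y, T (fun x => Cadd (f x) (g x)) y = Cadd (T f y) (T g y)) /\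
  (forall c f, InL2 f -> forall y, T (fun x => Cmul c (f x)) y = Cmul c (T f y)) /\
  (exists K, 0 <= K /\ forall f, InL2 f -> norm2 (T f) <= K * norm2 f).

Definition opsub {X Y : Type} (T S : Op X Y) : Op X Y :=
  fun f y => Cadd (T f y) (Copp (S f y)).

Definition OpClosure {X Y : Type} (P : Op X Y -> Prop) (T : Op X Y) : Prop :=
  BoundedOp T /\
  forall eps, 0 < eps -> exists S, P S /\
    forall f, InL2 f -> norm2 (opsub T S f) <= eps ^ 2 * norm2 f.

(** matrix coefficient T_{yx} = <T δ_x, δ_y> *)
Definition coef {X Y : Type} (T : Op X Y) (x : X) (y : Y) : C := T (delta x) y.

Definition PropLess {X Y : Type} (rho : (X + Y) -> (X + Y) -> R) (T : Op X Y) (L : R) : Prop :=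
  forall x y, rho (inl x) (inr y) >= L -> coef T x y = C0.

Definition FinitePropagation {X Y : Type} (rho : (X + Y) -> (X + Y) -> R) (T : Op X Y) : Prop :=
  exists L, PropLess rho T L.

Definition Mrho {X Y : Type} (rho : (X + Y) -> (X + Y) -> R) : Op X Y -> Prop :=
  OpClosure (fun S => BoundedOp S /\ FinitePropagation rho S).

(** M \hat\otimes N : closure of the linear span of compositions S ∘ T *)
Definition HatTensor {X Y Z : Type} (M : Op X Y -> Prop) (N : Op Y Z -> Prop) : Op X Z -> Prop :=
  OpClosure (fun U => exists l : list (C * Op X Y * Op Y Z),
    (forall c T S, In (c, T, S) l -> M T /\ N S) /\
    forall f, InL2 f -> forall z,
      U f z = fold_right (fun p acc => Cadd (Cmul (fst (fst p)) ((snd p) ((snd (fst p)) f) z)) acc) C0 l).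

From Pilot Require Import Defs.
From Stdlib Require Import Reals Lra Lia Psatz List Classical ClassicalEpsilon FunctionalExtensionality.
Import ListNotations.
Import Pilot.Defs.
Open Scope R_scope.

(** Both sides are norm closures, so it suffices to compare the classes being closed.

    - Inclusion [(x) <= M]: a product [S o T] of finite-propagation operators has
      finite propagation for the composite metric, since [(S o T)_{zx}] only involves
      paths [x -> y -> z] of length at most the sum of the propagations ([FPB_comp]).
      Norm limits are compatible with sums, scalars and products ([close_to_*],
      [approximable_*]), so every element of the tensor product is approximable by
      finite-propagation operators ([tensor_in_Mrho]).
    - Inclusion [M <= (x)]: by bounded geometry, a finite-propagation operator [S] is a
      finite sum [sum_{k,j} P_kj o Q_j] of weighted partial translations [X -> Y] and
      [Y -> Z] of finite propagation ([FPB_decomposes]); its approximants thus already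
      lie in the span of products.

    The analytic ingredients are that a bounded operator is determined on each column
    by its matrix coefficients ([bop_matrix]), and that weighted partial translations
    with uniformly finite fibres are bounded ([ptrans_bounded]). *)

Lemma C_ext (a b : C) : fst a = fst b -> snd a = snd b -> a = b.
Proof. destruct a, b; simpl; intros; subst; reflexivity. Qed.

Ltac C_ring := apply C_ext; unfold Cadd, Cmul, Copp, C0, C1; simpl; ring.

Lemma Cnorm2_ge0 a : 0 <= Cnorm2 a.
Proof. unfold Cnorm2; nra. Qed.

Lemma Cnorm2_add_le a b : Cnorm2 (Cadd a b) <= 2 * Cnorm2 a + 2 * Cnorm2 b.
Proof.
  unfold Cnorm2, Cadd; simpl.
  pose proof (pow2_ge_0 (fst a - fst b)); pose proof (pow2_ge_0 (snd a - snd b)); nra.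
Qed.

Lemma Cnorm2_mul a b : Cnorm2 (Cmul a b) = Cnorm2 a * Cnorm2 b.
Proof. unfold Cnorm2, Cmul; simpl; ring. Qed.

Lemma Cnorm2_C0 : Cnorm2 C0 = 0.
Proof. unfold Cnorm2, C0; simpl; ring. Qed.

Lemma Cnorm2_C1 : Cnorm2 C1 = 1.
Proof. unfold Cnorm2, C1; simpl; ring. Qed.

Lemma Cnorm2_eq0 a : Cnorm2 a <= 0 -> a = C0.
Proof.
  unfold Cnorm2; destruct a as [p q]; simpl; intros H.
  assert (p = 0) by nra; assert (q = 0) by nra; subst; reflexivity.
Qed.

Lemma Cadd_0l a : Cadd C0 a = a. Proof. C_ring. Qed.
Lemma Cadd_0r a : Cadd a C0 = a. Proof. C_ring. Qed.
Lemma Cmul_0l a : Cmul C0 a = C0. Proof. C_ring. Qed.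
Lemma Cmul_0r a : Cmul a C0 = C0. Proof. C_ring. Qed.
Lemma Cmul_1l a : Cmul C1 a = a. Proof. C_ring. Qed.

Lemma mul_div_succ_le (K e : R) : 0 <= K -> 0 <= e -> K * (e / (K + 1)) <= e.
Proof.
  intros HK He. apply (Rmult_le_reg_r (K + 1)); [lra|]. unfold Rdiv.
  replace (K * (e * / (K + 1)) * (K + 1)) with (K * e * ((K + 1) * / (K + 1))) by ring.
  rewrite Rinv_r by lra. nra.
Qed.

Definition csum {A} (l : list A) (F : A -> C) : C :=
  fold_right (fun a acc => Cadd (F a) acc) C0 l.

Lemma csum_zero {A} (l : list A) F : (forall a, In a l -> F a = C0) -> csum l F = C0.
Proof. induction l; simpl; intros H; auto. rewrite H, IHl by auto. apply Cadd_0l. Qed.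

Lemma csum_ext {A} (l : list A) F G : (forall a, In a l -> F a = G a) -> csum l F = csum l G.
Proof. induction l; simpl; intros H; auto. rewrite H, IHl; auto. Qed.

Lemma csum_app {A} (l1 l2 : list A) F : csum (l1 ++ l2) F = Cadd (csum l1 F) (csum l2 F).
Proof. induction l1; simpl. - rewrite Cadd_0l; auto. - rewrite IHl1; C_ring. Qed.

Lemma csum_flat_map {A B} (g : A -> list B) L F :
  csum (flat_map g L) F = csum L (fun k => csum (g k) F).
Proof. induction L; simpl; auto. rewrite csum_app, IHL; auto. Qed.

Lemma csum_map {A B} (h : A -> B) L F : csum (map h L) F = csum L (fun j => F (h j)).
Proof. induction L; simpl; auto. rewrite IHL; auto. Qed.

Lemma psum_app {T} (f : T -> C) l1 l2 : psum f (l1 ++ l2) = psum f l1 + psum f l2.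
Proof. induction l1; simpl; [ring|]. rewrite IHl1; ring. Qed.

Lemma norm2_lub {T} (f : T -> C) :
  InL2 f -> is_lub (fun s => exists l, NoDup l /\ s = psum f l) (norm2 f).
Proof.
  intros [B HB]. unfold norm2, Rsup. apply epsilon_spec.
  destruct (completeness (fun s => exists l, NoDup l /\ s = psum f l)) as [m Hm].
  - exists B. intros s [l [Hl ->]]. apply HB; auto.
  - exists 0, nil. split; [constructor|reflexivity].
  - exists m; exact Hm.
Qed.

Lemma psum_le_norm2 {T} (f : T -> C) l : InL2 f -> NoDup l -> psum f l <= norm2 f.
Proof. intros H Hl. apply (norm2_lub f H). exists l; auto. Qed.

Lemma norm2_ge0 {T} (f : T -> C) : InL2 f -> 0 <= norm2 f.
Proof. intros H. pose proof (psum_le_norm2 f nil H (NoDup_nil _)). simpl in *; lra. Qed.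

Lemma norm2_le {T} (f : T -> C) b :
  InL2 f -> (forall l, NoDup l -> psum f l <= b) -> norm2 f <= b.
Proof. intros H Hb. apply (norm2_lub f H). intros s [l [Hl ->]]. auto. Qed.

Lemma coord_le_norm2 {T} (f : T -> C) x : InL2 f -> Cnorm2 (f x) <= norm2 f.
Proof.
  intros H. assert (Hx : NoDup [x]) by (constructor; [simpl; tauto | constructor]).
  pose proof (psum_le_norm2 f [x] H Hx). simpl in *. lra.
Qed.

Lemma L2_dominated {T} (f g h : T -> C) (a b : R) :
  0 <= a -> 0 <= b -> InL2 f -> InL2 g ->
  (forall x, Cnorm2 (h x) <= a * Cnorm2 (f x) + b * Cnorm2 (g x)) ->
  InL2 h /\ norm2 h <= a * norm2 f + b * norm2 g.
Proof.
  intros Ha Hb Hf Hg H.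
  assert (Hl : forall l, NoDup l -> psum h l <= a * norm2 f + b * norm2 g).
  { intros l Hl.
    assert (psum h l <= a * psum f l + b * psum g l).
    { clear Hl. induction l as [|x l IH]; simpl; [lra|]. specialize (H x). nra. }
    pose proof (psum_le_norm2 f l Hf Hl). pose proof (psum_le_norm2 g l Hg Hl). nra. }
  assert (InL2 h) by (exists (a * norm2 f + b * norm2 g); auto).
  split; auto. apply norm2_le; auto.
Qed.

Lemma L2_dominated1 {T} (f h : T -> C) (a : R) :
  0 <= a -> InL2 f -> (forall x, Cnorm2 (h x) <= a * Cnorm2 (f x)) ->
  InL2 h /\ norm2 h <= a * norm2 f.
Proof.
  intros Ha Hf H. destruct (L2_dominated f f h a 0 Ha (Rle_refl 0) Hf Hf) as [H1 H2].
  - intros x; specialize (H x); lra.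
  - split; auto; lra.
Qed.

Lemma zero_L2 {T} : InL2 (fun _ : T => C0) /\ norm2 (fun _ : T => C0) = 0.
Proof.
  assert (H0 : InL2 (fun _ : T => C0)).
  { exists 0. intros l _. induction l; simpl; [lra|]. rewrite Cnorm2_C0; lra. }
  split; auto. apply Rle_antisym; [|apply norm2_ge0; auto].
  apply norm2_le; auto. intros l _. induction l; simpl; [lra|]. rewrite Cnorm2_C0; lra.
Qed.

Lemma add_L2 {T} (f g : T -> C) : InL2 f -> InL2 g ->
  InL2 (fun x => Cadd (f x) (g x)) /\ norm2 (fun x => Cadd (f x) (g x)) <= 2 * norm2 f + 2 * norm2 g.
Proof. intros Hf Hg. apply L2_dominated; auto; try lra. intros; apply Cnorm2_add_le. Qed.

Lemma scal_L2 {T} c (f : T -> C) : InL2 f ->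
  InL2 (fun x => Cmul c (f x)) /\ norm2 (fun x => Cmul c (f x)) <= Cnorm2 c * norm2 f.
Proof.
  intros Hf. apply L2_dominated1; auto; [apply Cnorm2_ge0|].
  intros; rewrite Cnorm2_mul; lra.
Qed.

Lemma opp_L2 {T} (f : T -> C) : InL2 f -> InL2 (fun x => Copp (f x)).
Proof.
  intros Hf. apply (L2_dominated1 f _ 1); auto; [lra|].
  intros x; unfold Cnorm2, Copp; simpl; lra.
Qed.

Lemma sub_L2 {T} (f g : T -> C) : InL2 f -> InL2 g -> InL2 (fun x => Cadd (f x) (Copp (g x))).
Proof. intros Hf Hg. apply add_L2; auto. apply opp_L2; auto. Qed.

Lemma delta_L2 {T} (x : T) : InL2 (delta x) /\ norm2 (delta x) <= 1.
Proof.
  assert (Hs : forall l, NoDup l -> psum (delta x) l <= 1).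
  { intros l Hl. assert (Hzero : forall l, ~ In x l -> psum (delta x) l = 0).
    { intros l' Hn. induction l' as [|a l' IH]; simpl; auto. unfold delta at 1.
      destruct (excluded_middle_informative (x = a)); [subst; simpl in Hn; tauto|].
      rewrite Cnorm2_C0, IH; [ring|]. simpl in Hn; tauto. }
    induction Hl as [|a l Ha Hl IH]; simpl; [lra|]. unfold delta at 1.
    destruct (excluded_middle_informative (x = a)) as [->|].
    - rewrite Cnorm2_C1, Hzero; auto; lra.
    - rewrite Cnorm2_C0; lra. }
  assert (InL2 (delta x)) by (exists 1; auto).
  split; auto. apply norm2_le; auto.
Qed.

Section BoundedOperators.
Context {X Y : Type}.

Lemma bop_L2 (S : Op X Y) f : BoundedOp S -> InL2 f -> InL2 (S f).
Proof. intros [H _] Hf; auto. Qed.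

Lemma bop_add (S : Op X Y) f g y : BoundedOp S -> InL2 f -> InL2 g ->
  S (fun x => Cadd (f x) (g x)) y = Cadd (S f y) (S g y).
Proof. intros [_ [H _]]; auto. Qed.

Lemma bop_scal (S : Op X Y) c f y : BoundedOp S -> InL2 f ->
  S (fun x => Cmul c (f x)) y = Cmul c (S f y).
Proof. intros [_ [_ [H _]]]; auto. Qed.

Lemma bop_norm (S : Op X Y) : BoundedOp S ->
  exists K, 0 <= K /\ forall f, InL2 f -> norm2 (S f) <= K * norm2 f.
Proof. intros [_ [_ [_ H]]]; auto. Qed.

Lemma bop_zero (S : Op X Y) y : BoundedOp S -> S (fun _ => C0) y = C0.
Proof.
  intros HS. assert (E : (fun _ : X => C0) = (fun x : X => Cmul C0 C0)).
  { apply functional_extensionality; intros; rewrite Cmul_0l; auto. }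
  rewrite E, (bop_scal S C0 (fun _ => C0)) by (auto; apply zero_L2). apply Cmul_0l.
Qed.

Lemma bop_sub (S : Op X Y) f g y : BoundedOp S -> InL2 f -> InL2 g ->
  S (fun x => Cadd (f x) (Copp (g x))) y = Cadd (S f y) (Copp (S g y)).
Proof.
  intros HS Hf Hg.
  assert (E : (fun x => Copp (g x)) = (fun x => Cmul (-1, 0) (g x))).
  { apply functional_extensionality; intros; C_ring. }
  rewrite bop_add by (auto; apply opp_L2; auto).
  rewrite E, bop_scal; auto. C_ring.
Qed.

Lemma coef_bounded (S : Op X Y) : BoundedOp S ->
  exists K, 0 <= K /\ forall x y, Cnorm2 (coef S x y) <= K.
Proof.
  intros HS. destruct (bop_norm S HS) as [K [HK HK']]. exists K. split; auto. intros x y.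
  destruct (delta_L2 x) as [Hd Hd1].
  eapply Rle_trans; [apply coord_le_norm2, bop_L2; auto|].
  eapply Rle_trans; [apply HK'; auto|]. nra.
Qed.

Lemma bop_agree (A B : Op X Y) :
  (forall f, InL2 f -> A f = B f) -> BoundedOp A -> BoundedOp B.
Proof.
  intros E [H1 [H2 [H3 [K [HK H4]]]]].
  split; [|split; [|split]].
  - intros f Hf; rewrite <- E; auto.
  - intros f g Hf Hg y. rewrite <- !E; auto. apply add_L2; auto.
  - intros c f Hf y. rewrite <- !E; auto. apply scal_L2; auto.
  - exists K; split; auto. intros f Hf; rewrite <- E; auto.
Qed.

End BoundedOperators.

Definition op_zero {X Y} : Op X Y := fun _ _ => C0.
Definition op_add {X Y} (A B : Op X Y) : Op X Y := fun f y => Cadd (A f y) (B f y).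
Definition op_scal {X Y} (c : C) (A : Op X Y) : Op X Y := fun f y => Cmul c (A f y).
Definition op_comp {X Y Z} (T : Op X Y) (S : Op Y Z) : Op X Z := fun f => S (T f).

Lemma bounded_op_zero {X Y} : BoundedOp (@op_zero X Y).
Proof.
  unfold op_zero; split; [|split; [|split]]; intros; try C_ring.
  - apply zero_L2.
  - exists 0. split; [lra|]. intros f Hf. rewrite (proj2 zero_L2). lra.
Qed.

Lemma bounded_op_add {X Y} (A B : Op X Y) :
  BoundedOp A -> BoundedOp B -> BoundedOp (op_add A B).
Proof.
  intros HA HB. destruct (bop_norm A HA) as [KA [HKA HA']].
  destruct (bop_norm B HB) as [KB [HKB HB']]. unfold op_add.
  split; [|split; [|split]].
  - intros f Hf; apply add_L2; apply bop_L2; auto.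
  - intros f g Hf Hg y. rewrite !bop_add; auto. C_ring.
  - intros c f Hf y. rewrite !bop_scal; auto. C_ring.
  - exists (2 * KA + 2 * KB). split; [lra|]. intros f Hf.
    eapply Rle_trans; [apply add_L2; apply bop_L2; auto|].
    specialize (HA' f Hf); specialize (HB' f Hf). lra.
Qed.

Lemma bounded_op_scal {X Y} c (A : Op X Y) : BoundedOp A -> BoundedOp (op_scal c A).
Proof.
  intros HA. destruct (bop_norm A HA) as [KA [HKA HA']]. unfold op_scal.
  pose proof (Cnorm2_ge0 c). split; [|split; [|split]].
  - intros f Hf; apply scal_L2; apply bop_L2; auto.
  - intros f g Hf Hg y. rewrite !bop_add; auto. C_ring.
  - intros d f Hf y. rewrite !bop_scal; auto. C_ring.
  - exists (Cnorm2 c * KA). split; [nra|]. intros f Hf.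
    eapply Rle_trans; [apply scal_L2; apply bop_L2; auto|].
    rewrite Rmult_assoc. apply Rmult_le_compat_l; auto.
Qed.

Lemma bounded_op_comp {X Y Z} (T : Op X Y) (S : Op Y Z) :
  BoundedOp T -> BoundedOp S -> BoundedOp (op_comp T S).
Proof.
  intros HT HS. destruct (bop_norm T HT) as [KT [HKT HT']].
  destruct (bop_norm S HS) as [KS [HKS HS']]. unfold op_comp.
  split; [|split; [|split]].
  - intros f Hf; apply bop_L2; auto; apply bop_L2; auto.
  - intros f g Hf Hg y.
    replace (T (fun x => Cadd (f x) (g x))) with (fun x => Cadd (T f x) (T g x))
      by (apply functional_extensionality; intros; symmetry; apply bop_add; auto).
    apply bop_add; auto; apply bop_L2; auto.
  - intros c f Hf y.
    replace (T (fun x => Cmul c (f x))) with (fun x => Cmul c (T f x))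
      by (apply functional_extensionality; intros; symmetry; apply bop_scal; auto).
    apply bop_scal; auto; apply bop_L2; auto.
  - exists (KS * KT). split; [nra|]. intros f Hf.
    eapply Rle_trans; [apply HS'; apply bop_L2; auto|].
    rewrite Rmult_assoc. apply Rmult_le_compat_l; auto.
Qed.

Definition restrict {X} (F : list X) (g : X -> C) : X -> C :=
  fun x => if excluded_middle_informative (In x F) then g x else C0.

Definition cut {X} (F : list X) (g : X -> C) : X -> C :=
  fun x => if excluded_middle_informative (In x F) then C0 else g x.

Lemma restrict_cut {X} F (g : X -> C) x : g x = Cadd (restrict F g x) (cut F g x).
Proof.
  unfold restrict, cut; destruct excluded_middle_informative;
  [rewrite Cadd_0r | rewrite Cadd_0l]; auto.
Qed.

Lemma restrict_L2 {X} F (g : X -> C) : InL2 g -> InL2 (restrict F g).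
Proof.
  intros H; apply (L2_dominated1 g _ 1); auto; [lra|]. intros x; unfold restrict.
  destruct excluded_middle_informative; [lra|]. rewrite Cnorm2_C0; pose proof (Cnorm2_ge0 (g x)); lra.
Qed.

Lemma cut_L2 {X} F (g : X -> C) : InL2 g -> InL2 (cut F g).
Proof.
  intros H; apply (L2_dominated1 g _ 1); auto; [lra|]. intros x; unfold cut.
  destruct excluded_middle_informative; [|lra]. rewrite Cnorm2_C0; pose proof (Cnorm2_ge0 (g x)); lra.
Qed.

Lemma bop_restrict {X Y} (S : Op X Y) g z F : BoundedOp S -> InL2 g -> NoDup F ->
  S (restrict F g) z = csum F (fun x => Cmul (g x) (coef S x z)).
Proof.
  intros HS Hg HF. induction HF as [|x l Hx Hl IH]; simpl.
  - replace (restrict [] g) with (fun _ : X => C0)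
      by (apply functional_extensionality; intros; unfold restrict;
          destruct excluded_middle_informative; simpl in *; tauto).
    apply bop_zero; auto.
  - assert (E : restrict (x :: l) g = fun y => Cadd (Cmul (g x) (delta x y)) (restrict l g y)).
    { apply functional_extensionality; intros y; unfold restrict, delta.
      destruct (excluded_middle_informative (In y (x :: l))) as [i|i];
      destruct (excluded_middle_informative (x = y));
      destruct (excluded_middle_informative (In y l)); subst; simpl in *; try tauto;
      try (destruct i; [congruence|]); C_ring. }
    destruct (delta_L2 x) as [Hd _].
    rewrite E, bop_add, bop_scal, IH; auto.
    + apply scal_L2; auto.
    + apply restrict_L2; auto.
Qed.

Lemma small_tail {X} (g : X -> C) eps : InL2 g -> 0 < eps ->
  exists l, NoDup l /\ norm2 (cut l g) <= eps.
Proof.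
  intros Hg He.
  assert (Hex : exists l, NoDup l /\ norm2 g - eps < psum g l).
  { apply NNPP; intros Hn. assert (norm2 g <= norm2 g - eps); [|lra].
    apply (norm2_lub g Hg). intros s [l [Hl ->]].
    apply Rnot_lt_le; intros Hlt; apply Hn; exists l; auto. }
  destruct Hex as [l [Hl Hlt]]. exists l; split; auto.
  apply norm2_le; [apply cut_L2; auto|]. intros l' Hl'.
  set (p := fun x => if excluded_middle_informative (In x l) then false else true).
  assert (E : psum (cut l g) l' = psum g (filter p l')).
  { clear Hl'. induction l' as [|a l' IH]; simpl; auto. unfold cut at 1, p at 1.
    destruct excluded_middle_informative; simpl; rewrite IH; [rewrite Cnorm2_C0|]; ring. }
  assert (ND : NoDup (l ++ filter p l')).
  { apply NoDup_app; auto; [apply NoDup_filter; auto|].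
    intros a Ha Hin. apply filter_In in Hin. destruct Hin as [_ Hp]. unfold p in Hp.
    destruct excluded_middle_informative; [discriminate | tauto]. }
  pose proof (psum_le_norm2 g _ Hg ND). rewrite psum_app in H. lra.
Qed.

Lemma nonpos_of_le_all_pos (a : R) : (forall e, 0 < e -> a <= e) -> a <= 0.
Proof. intros H. apply Rnot_lt_le; intros Ha. specialize (H (a / 2)). lra. Qed.

Lemma bop_vanishes {X Y} (S : Op X Y) g z : BoundedOp S -> InL2 g ->
  (forall x, g x <> C0 -> coef S x z = C0) -> S g z = C0.
Proof.
  intros HS Hg Hc. destruct (bop_norm S HS) as [K [HK HKb]].
  apply Cnorm2_eq0, nonpos_of_le_all_pos. intros e He.
  destruct (small_tail g (e / (K + 1)) Hg) as [l [Hl Hr]]; [apply Rdiv_lt_0_compat; lra|].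
  assert (Hfinite : S (restrict l g) z = C0).
  { rewrite bop_restrict; auto. apply csum_zero. intros x _.
    destruct (classic (g x = C0)) as [e0|e0]; [rewrite e0, Cmul_0l | rewrite (Hc x e0), Cmul_0r]; auto. }
  assert (Esplit : S g z = S (cut l g) z).
  { replace g with (fun x => Cadd (restrict l g x) (cut l g x)) at 1
      by (apply functional_extensionality; intros; symmetry; apply restrict_cut).
    rewrite bop_add, Hfinite, Cadd_0l; auto; [apply restrict_L2 | apply cut_L2]; auto. }
  rewrite Esplit. eapply Rle_trans; [apply coord_le_norm2, bop_L2, cut_L2; auto|].
  eapply Rle_trans; [apply HKb, cut_L2; auto|].
  pose proof (mul_div_succ_le K e HK (Rlt_le _ _ He)).
  pose proof (norm2_ge0 _ (cut_L2 l g Hg)). nra.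
Qed.

Lemma bop_matrix {X Y} (S : Op X Y) g z F : BoundedOp S -> InL2 g -> NoDup F ->
  (forall x, coef S x z <> C0 -> In x F) ->
  S g z = csum F (fun x => Cmul (g x) (coef S x z)).
Proof.
  intros HS Hg HF Hc.
  replace g with (fun x => Cadd (restrict F g x) (cut F g x)) at 1
    by (apply functional_extensionality; intros; symmetry; apply restrict_cut).
  assert (Hcut : S (cut F g) z = C0).
  { apply bop_vanishes; auto; [apply cut_L2; auto|].
    intros x Hx. unfold cut in Hx. destruct excluded_middle_informative; [tauto|].
    apply NNPP; auto. }
  rewrite bop_add, bop_restrict, Hcut, Cadd_0r; auto; [apply restrict_L2 | apply cut_L2]; auto.
Qed.

Definition close_to {X Y} (A B : Op X Y) (e : R) : Prop :=
  forall f, InL2 f -> norm2 (opsub A B f) <= e * norm2 f.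

Definition approximable {X Y} (P : Op X Y -> Prop) (T : Op X Y) : Prop :=
  forall e, 0 < e -> exists S, P S /\ close_to T S e.

(** [OpClosure] measures errors by [eps ^ 2]; up to that reparametrisation it is
    "bounded and approximable". *)
Lemma OpClosure_iff {X Y} (P : Op X Y -> Prop) T :
  OpClosure P T <-> BoundedOp T /\ approximable P T.
Proof.
  split; intros [HT Ha]; split; auto; intros e He.
  - destruct (Ha (sqrt e) (sqrt_lt_R0 e He)) as [S [HS HTS]]. exists S; split; auto.
    rewrite <- (sqrt_sqrt e) by lra. intros f Hf. specialize (HTS f Hf). simpl in HTS; lra.
  - destruct (Ha (e ^ 2) (pow_lt e 2 He)) as [S HS]. exists S; exact HS.
Qed.

Section CloseTo.
Context {X Y Z : Type}.

Lemma close_to_weaken (A B : Op X Y) e e' : e <= e' -> close_to A B e -> close_to A B e'.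
Proof.
  intros Hle H f Hf. specialize (H f Hf). pose proof (norm2_ge0 f Hf). nra.
Qed.

Lemma close_to_refl (A : Op X Y) e : 0 <= e -> close_to A A e.
Proof.
  intros He f Hf. replace (opsub A A f) with (fun _ : Y => C0)
    by (apply functional_extensionality; intros; unfold opsub; C_ring).
  rewrite (proj2 zero_L2). pose proof (norm2_ge0 f Hf). nra.
Qed.

Lemma opsub_L2 (A B : Op X Y) f : BoundedOp A -> BoundedOp B -> InL2 f -> InL2 (opsub A B f).
Proof. intros; apply sub_L2; apply bop_L2; auto. Qed.

(** Errors add up: if [A - B] splits as [(A1 - B1) + (A2 - B2)], the error bounds add
    (with the constant 2 of [|a + b|^2 <= 2|a|^2 + 2|b|^2]). *)
Lemma close_to_split (A B A1 B1 A2 B2 : Op X Y) e1 e2 :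
  BoundedOp A1 -> BoundedOp B1 -> BoundedOp A2 -> BoundedOp B2 ->
  (forall f y, opsub A B f y = Cadd (opsub A1 B1 f y) (opsub A2 B2 f y)) ->
  close_to A1 B1 e1 -> close_to A2 B2 e2 -> close_to A B (2 * e1 + 2 * e2).
Proof.
  intros HA1 HB1 HA2 HB2 E H1 H2 f Hf.
  replace (opsub A B f) with (fun y => Cadd (opsub A1 B1 f y) (opsub A2 B2 f y))
    by (apply functional_extensionality; intros; symmetry; apply E).
  eapply Rle_trans; [apply add_L2; apply opsub_L2; auto|].
  specialize (H1 f Hf); specialize (H2 f Hf). lra.
Qed.

Lemma close_to_trans (A B D : Op X Y) e1 e2 :
  BoundedOp A -> BoundedOp B -> BoundedOp D ->
  close_to A B e1 -> close_to B D e2 -> close_to A D (2 * e1 + 2 * e2).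
Proof.
  intros HA HB HD. apply close_to_split; auto. intros; unfold opsub; C_ring.
Qed.

Lemma close_to_add (A B A' B' : Op X Y) e1 e2 :
  BoundedOp A -> BoundedOp B -> BoundedOp A' -> BoundedOp B' ->
  close_to A A' e1 -> close_to B B' e2 -> close_to (op_add A B) (op_add A' B') (2 * e1 + 2 * e2).
Proof.
  intros HA HB HA' HB'. apply close_to_split; auto. intros; unfold opsub, op_add; C_ring.
Qed.

Lemma close_to_scal c (A A' : Op X Y) e : BoundedOp A -> BoundedOp A' ->
  close_to A A' e -> close_to (op_scal c A) (op_scal c A') (Cnorm2 c * e).
Proof.
  intros HA HA' H f Hf.
  replace (opsub (op_scal c A) (op_scal c A') f) with (fun y => Cmul c (opsub A A' f y))
    by (apply functional_extensionality; intros; unfold opsub, op_scal; C_ring).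
  eapply Rle_trans; [apply scal_L2, opsub_L2; auto|].
  pose proof (Cnorm2_ge0 c). specialize (H f Hf). rewrite Rmult_assoc. apply Rmult_le_compat_l; auto.
Qed.

Lemma close_to_comp_l (T T' : Op X Y) (S : Op Y Z) K e :
  BoundedOp T -> BoundedOp T' -> BoundedOp S -> 0 <= K ->
  (forall g, InL2 g -> norm2 (S g) <= K * norm2 g) ->
  close_to T T' e -> close_to (op_comp T S) (op_comp T' S) (K * e).
Proof.
  intros HT HT' HS HK HSK H f Hf.
  replace (opsub (op_comp T S) (op_comp T' S) f) with (S (opsub T T' f))
    by (apply functional_extensionality; intros; unfold op_comp, opsub; rewrite bop_sub;
        auto; apply bop_L2; auto).
  eapply Rle_trans; [apply HSK, opsub_L2; auto|].
  rewrite Rmult_assoc. apply Rmult_le_compat_l; auto.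
Qed.

Lemma close_to_comp_r (T : Op X Y) (S S' : Op Y Z) K e :
  BoundedOp T -> 0 <= e -> (forall f, InL2 f -> norm2 (T f) <= K * norm2 f) ->
  close_to S S' e -> close_to (op_comp T S) (op_comp T S') (e * K).
Proof.
  intros HT He HTK H f Hf. unfold op_comp, opsub at 1.
  eapply Rle_trans; [apply H, bop_L2; auto|].
  rewrite Rmult_assoc. apply Rmult_le_compat_l; auto.
Qed.

Lemma close_to_agree (A B W : Op X Y) e :
  (forall f, InL2 f -> A f = B f) -> close_to A W e -> close_to B W e.
Proof. intros E H f Hf. unfold opsub. rewrite <- E; auto. apply H; auto. Qed.

End CloseTo.

Section Approximable.
Context {X Y : Type} (P : Op X Y -> Prop).
Hypothesis P_bounded : forall S, P S -> BoundedOp S.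

Lemma approximable_self T : P T -> approximable P T.
Proof. intros HT e He. exists T; split; auto. apply close_to_refl; lra. Qed.

Lemma approximable_add A B :
  (forall A' B', P A' -> P B' -> P (op_add A' B')) -> BoundedOp A -> BoundedOp B ->
  approximable P A -> approximable P B -> approximable P (op_add A B).
Proof.
  intros Hadd HA HB HaA HaB e He.
  destruct (HaA (e / 4)) as [A' [HA' H1]]; [lra|].
  destruct (HaB (e / 4)) as [B' [HB' H2]]; [lra|].
  exists (op_add A' B'); split; auto.
  apply close_to_weaken with (2 * (e / 4) + 2 * (e / 4)); [lra|].
  apply close_to_add; auto.
Qed.

Lemma approximable_scal c A :
  (forall A', P A' -> P (op_scal c A')) -> BoundedOp A ->
  approximable P A -> approximable P (op_scal c A).
Proof.
  intros Hscal HA HaA e He. pose proof (Cnorm2_ge0 c).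
  destruct (HaA (e / (Cnorm2 c + 1))) as [A' [HA' H1]]; [apply Rdiv_lt_0_compat; lra|].
  exists (op_scal c A'); split; auto.
  apply close_to_weaken with (Cnorm2 c * (e / (Cnorm2 c + 1))); [apply mul_div_succ_le; lra|].
  apply close_to_scal; auto.
Qed.

Lemma approximable_trans (Q : Op X Y -> Prop) T :
  (forall S, Q S -> BoundedOp S /\ approximable P S) -> BoundedOp T ->
  approximable Q T -> approximable P T.
Proof.
  intros HQ HT HaT e He.
  destruct (HaT (e / 4)) as [S [HS H1]]; [lra|]. destruct (HQ S HS) as [HSb HaS].
  destruct (HaS (e / 4)) as [W [HW H2]]; [lra|].
  exists W; split; auto.
  apply close_to_weaken with (2 * (e / 4) + 2 * (e / 4)); [lra|].
  apply close_to_trans with S; auto.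
Qed.

End Approximable.

Lemma approximable_mono {X Y} (P Q : Op X Y -> Prop) T :
  (forall S, P S -> Q S) -> approximable P T -> approximable Q T.
Proof. intros HPQ H e He. destruct (H e He) as [S [HS HTS]]. exists S; auto. Qed.

Definition FPB {X Y} (rho : (X + Y) -> (X + Y) -> R) (S : Op X Y) : Prop :=
  BoundedOp S /\ FinitePropagation rho S.

Lemma FPB_bounded {X Y} rho (S : Op X Y) : FPB rho S -> BoundedOp S.
Proof. intros [H _]; exact H. Qed.

Lemma Mrho_iff {X Y} rho (T : Op X Y) : Mrho rho T <-> BoundedOp T /\ approximable (FPB rho) T.
Proof. apply OpClosure_iff. Qed.

Lemma FPB_zero {X Y} rho : FPB rho (@op_zero X Y).
Proof. split; [apply bounded_op_zero|]. exists 0. intros x y _. reflexivity. Qed.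

Lemma FPB_add {X Y} rho (U V : Op X Y) : FPB rho U -> FPB rho V -> FPB rho (op_add U V).
Proof.
  intros [HU [L1 H1]] [HV [L2 H2]]. split; [apply bounded_op_add; auto|].
  exists (Rmax L1 L2). intros x y Hxy. change (Cadd (coef U x y) (coef V x y) = C0).
  pose proof (Rmax_l L1 L2); pose proof (Rmax_r L1 L2).
  rewrite (H1 x y), (H2 x y) by lra. apply Cadd_0l.
Qed.

Lemma FPB_scal {X Y} rho c (U : Op X Y) : FPB rho U -> FPB rho (op_scal c U).
Proof.
  intros [HU [L H]]. split; [apply bounded_op_scal; auto|].
  exists L. intros x y Hxy. change (Cmul c (coef U x y) = C0). rewrite (H x y) by lra.
  apply Cmul_0r.
Qed.

Lemma glb_exists (E : R -> Prop) : (exists r, E r) -> (forall r, E r -> 0 <= r) ->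
  is_glb E (Rinf E).
Proof.
  intros [r0 Hr0] Hpos. unfold Rinf. apply epsilon_spec.
  destruct (completeness (fun r => E (- r))) as [m [Hm1 Hm2]].
  - exists 0. intros r Hr. specialize (Hpos _ Hr). lra.
  - exists (- r0). rewrite Ropp_involutive; auto.
  - exists (- m). split.
    + intros r Hr. assert (- r <= m) by (apply Hm1; rewrite Ropp_involutive; auto). lra.
    + intros b Hb. assert (m <= - b); [|lra]. apply Hm2. intros r Hr. specialize (Hb _ Hr). lra.
Qed.

Section CompositeMetric.
Context {X Y Z : Type} (dX : X -> X -> R) (dY : Y -> Y -> R) (dZ : Z -> Z -> R)
  (dXY : (X + Y) -> (X + Y) -> R) (dYZ : (Y + Z) -> (Y + Z) -> R).
Hypotheses (hXY : InD dX dY dXY) (hYZ : InD dY dZ dYZ) (hYne : inhabited Y).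

Lemma comp_metric_glb x z :
  is_glb (fun r => exists y : Y, r = dXY (inl x) (inr y) + dYZ (inl y) (inr z))
    (comp_metric dX dZ dXY dYZ (inl x) (inr z)).
Proof.
  apply glb_exists.
  - destruct hYne as [y]. exists (dXY (inl x) (inr y) + dYZ (inl y) (inr z)), y; reflexivity.
  - intros r [y ->]. destruct hXY as [[Hn _] _]. destruct hYZ as [[Hn' _] _].
    specialize (Hn (inl x) (inr y)); specialize (Hn' (inl y) (inr z)); lra.
Qed.

Lemma comp_metric_le x y z :
  comp_metric dX dZ dXY dYZ (inl x) (inr z) <= dXY (inl x) (inr y) + dYZ (inl y) (inr z).
Proof. apply (proj1 (comp_metric_glb x z)). eauto. Qed.

Lemma comp_metric_lt x z L : comp_metric dX dZ dXY dYZ (inl x) (inr z) < L ->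
  exists y, dXY (inl x) (inr y) + dYZ (inl y) (inr z) < L.
Proof.
  intros H. apply NNPP; intros Hn.
  assert (L <= comp_metric dX dZ dXY dYZ (inl x) (inr z)); [|lra].
  apply (proj2 (comp_metric_glb x z)). intros r [y ->].
  apply Rnot_lt_le; intros Hl; apply Hn; eauto.
Qed.

Lemma FPB_comp (T : Op X Y) (S : Op Y Z) :
  FPB dXY T -> FPB dYZ S -> FPB (comp_metric dX dZ dXY dYZ) (op_comp T S).
Proof.
  intros [HT [L1 H1]] [HS [L2 H2]]. split; [apply bounded_op_comp; auto|].
  exists (L1 + L2). intros x z Hxz. unfold coef, op_comp.
  apply bop_vanishes; auto; [apply bop_L2, delta_L2; auto|].
  intros y Hy. apply H2.
  assert (dXY (inl x) (inr y) < L1) by (apply Rnot_le_lt; intros Hn; apply Hy, H1; lra).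
  pose proof (comp_metric_le x y z). lra.
Qed.

End CompositeMetric.

(** * [M_dXY (X, Y) (x) M_dYZ (Y, Z)] is contained in [M_(dYZ o dXY) (X, Z)] *)

Definition span_op {X Y Z} (l : list (C * Op X Y * Op Y Z)) : Op X Z :=
  fun f z => fold_right (fun p acc => Cadd (Cmul (fst (fst p)) ((snd p) ((snd (fst p)) f) z)) acc) C0 l.

Section ProductsInClosure.
Context {X Y Z : Type} (dX : X -> X -> R) (dY : Y -> Y -> R) (dZ : Z -> Z -> R)
  (dXY : (X + Y) -> (X + Y) -> R) (dYZ : (Y + Z) -> (Y + Z) -> R).
Hypotheses (hXY : InD dX dY dXY) (hYZ : InD dY dZ dYZ) (hYne : inhabited Y).

Let comp := comp_metric dX dZ dXY dYZ.

(** A product [S o T] of norm limits of finite-propagation operators is a norm limit of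
    the finite-propagation products [S' o T']; the errors are balanced against the norm
    bounds of [S] and [T']. *)
Lemma approximable_comp (T : Op X Y) (S : Op Y Z) :
  Mrho dXY T -> Mrho dYZ S -> approximable (FPB comp) (op_comp T S).
Proof.
  intros HTm HSm e He. apply Mrho_iff in HTm as [HT HaT]. apply Mrho_iff in HSm as [HS HaS].
  destruct (bop_norm S HS) as [KS [HKS HS']].
  destruct (HaT (e / 4 / (KS + 1))) as [T' [[HT'b HT'f] H1]]; [apply Rdiv_lt_0_compat; lra|].
  destruct (bop_norm T' HT'b) as [KT [HKT HT'']].
  destruct (HaS (e / 4 / (KT + 1))) as [S' [[HS'b HS'f] H2]]; [apply Rdiv_lt_0_compat; lra|].
  exists (op_comp T' S'). split; [apply (FPB_comp dX dY dZ dXY dYZ hXY hYZ hYne); split; auto|].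
  apply close_to_weaken with (2 * (KS * (e / 4 / (KS + 1))) + 2 * (e / 4 / (KT + 1) * KT)).
  { pose proof (mul_div_succ_le KS (e / 4) HKS ltac:(lra)).
    pose proof (mul_div_succ_le KT (e / 4) HKT ltac:(lra)). lra. }
  assert (Hleft : close_to (op_comp T S) (op_comp T' S) (KS * (e / 4 / (KS + 1))))
    by (apply close_to_comp_l; auto).
  assert (Hright : close_to (op_comp T' S) (op_comp T' S') (e / 4 / (KT + 1) * KT))
    by (apply close_to_comp_r; auto; apply Rlt_le, Rdiv_lt_0_compat; lra).
  apply close_to_trans with (op_comp T' S); auto using bounded_op_comp.
Qed.

Lemma span_op_approximable l :
  (forall c T S, In (c, T, S) l -> Mrho dXY T /\ Mrho dYZ S) ->
  BoundedOp (span_op l) /\ approximable (FPB comp) (span_op l).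
Proof.
  induction l as [|[[c T] S] l IH]; intros Hl.
  - split; [apply bounded_op_zero|]. apply approximable_self, FPB_zero.
  - destruct (Hl c T S (or_introl eq_refl)) as [HT HS].
    destruct IH as [Hb Ha]; [intros c' T' S' H; exact (Hl c' T' S' (or_intror H))|].
    assert (HTS : BoundedOp (op_comp T S)) by (apply bounded_op_comp; [apply HT | apply HS]).
    change (span_op ((c, T, S) :: l)) with (op_add (op_scal c (op_comp T S)) (span_op l)).
    split; [apply bounded_op_add; auto; apply bounded_op_scal; auto|].
    apply (approximable_add _ (FPB_bounded comp)); auto using FPB_add, bounded_op_scal.
    apply (approximable_scal _ (FPB_bounded comp)); auto using FPB_scal.
    apply approximable_comp; auto.
Qed.

Lemma tensor_in_Mrho U : HatTensor (Mrho dXY) (Mrho dYZ) U -> Mrho comp U.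
Proof.
  intros HU. apply OpClosure_iff in HU as [HU Ha]. apply Mrho_iff. split; auto.
  refine (approximable_trans _ (FPB_bounded comp) _ U _ HU Ha).
  intros V [l [Hl HV]]. destruct (span_op_approximable l Hl) as [Hb Hap].
  assert (E : forall f, InL2 f -> span_op l f = V f)
    by (intros f Hf; apply functional_extensionality; intros z; symmetry; apply HV; auto).
  split; [apply (bop_agree _ _ E); auto|].
  intros e He. destruct (Hap e He) as [W [HW HVW]]. exists W; split; auto.
  apply (close_to_agree _ _ _ _ E); auto.
Qed.

End ProductsInClosure.

Lemma bounded_diameter {T} (d : T -> T -> R) : BoundedGeometry d -> forall D, 0 < D ->
  exists N, forall l, NoDup l -> (forall a b, In a l -> In b l -> d a b <= D) -> (length l <= N)%nat.
Proof.
  intros HG D HD. destruct (HG D HD) as [N HN]. exists N. intros l Hl Hd.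
  destruct l as [|a l]; [simpl; lia|]. apply (HN a); auto. intros b Hb; apply Hd; simpl; auto.
Qed.

Definition enum {T} (P : T -> Prop) : list T :=
  epsilon (inhabits nil) (fun l => NoDup l /\ forall x, In x l <-> P x).

Lemma enum_spec {T} (P : T -> Prop) (N : nat) :
  (forall l, NoDup l -> (forall x, In x l -> P x) -> (length l <= N)%nat) ->
  NoDup (enum P) /\ (forall x, In x (enum P) <-> P x) /\ (length (enum P) <= N)%nat.
Proof.
  intros HN.
  assert (Hex : forall m l, NoDup l -> (forall x, In x l -> P x) -> (N <= length l + m)%nat ->
     exists l', NoDup l' /\ forall x, In x l' <-> P x).
  { induction m; intros l Hl HP Hm.
    - exists l; split; auto. intros x; split; auto. intros Px. apply NNPP; intros Hn.
      assert (Hl' : NoDup (x :: l)) by (constructor; auto).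
      assert (length (x :: l) <= N)%nat by (apply HN; auto; intros y [<-|Hy]; auto).
      simpl in *; lia.
    - destruct (classic (forall x, P x -> In x l)) as [Hall|Hn].
      + exists l; split; auto; intros x; split; auto.
      + apply not_all_ex_not in Hn. destruct Hn as [x Hx].
        apply imply_to_and in Hx. destruct Hx as [Px Hx].
        apply (IHm (x :: l)); [constructor; auto | intros y [<-|Hy]; auto | simpl; lia]. }
  assert (Hspec : NoDup (enum P) /\ forall x, In x (enum P) <-> P x).
  { unfold enum. apply epsilon_spec.
    apply (Hex N (@nil T)); [constructor | simpl; tauto | simpl; lia]. }
  split; [apply Hspec|]. split; [apply Hspec|]. apply HN; apply Hspec.
Qed.

Definition ptrans {A B} (phi : B -> option A) (w : B -> C) : Op A B :=
  fun g b => match phi b with Some a => Cmul (w b) (g a) | None => C0 end.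

Section FibreSums.
Context {A B : Type} (phi : B -> option A) (v : A -> R).

Definition fibre_val (b : B) : R := match phi b with Some a => v a | None => 0 end.

Definition fibre_total (l : list B) : R := fold_right (fun b acc => fibre_val b + acc) 0 l.

Lemma fibre_total_filter (p : B -> bool) l :
  fibre_total l = fibre_total (filter p l) + fibre_total (filter (fun b => negb (p b)) l).
Proof. induction l as [|b l IH]; simpl; [lra|]. destruct (p b); simpl; rewrite IH; ring. Qed.

Lemma fibre_total_const a l :
  (forall b, In b l -> phi b = Some a) -> fibre_total l = INR (length l) * v a.
Proof.
  intros Hl; induction l as [|b l IH]; simpl; [lra|]. unfold fibre_val at 1.
  rewrite (Hl b (or_introl eq_refl)), IH by (intros; apply Hl; simpl; auto).
  destruct (length l); simpl; ring.
Qed.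

(** Summing [v o phi] over a duplicate-free list counts each value of [phi] at most [N]
    times: peel off the fibre of the first value and recurse on the rest. *)
Lemma fibre_sum N : (forall a, 0 <= v a) ->
  (forall a l, NoDup l -> (forall b, In b l -> phi b = Some a) -> (length l <= N)%nat) ->
  forall l, NoDup l -> exists As, NoDup As /\
    (forall a, In a As -> exists b, In b l /\ phi b = Some a) /\
    fibre_total l <= INR N * fold_right (fun a acc => v a + acc) 0 As.
Proof.
  intros Hv HN l. remember (length l) as n eqn:En. revert l En.
  induction n as [n IH] using Wf_nat.lt_wf_ind. intros [|b0 l'] En Hl.
  { exists nil; simpl; split; [constructor | split; [tauto | lra]]. }
  inversion Hl as [|? ? Hb0 Hl']; subst.
  destruct (phi b0) as [a|] eqn:Eb.
  - set (p := fun b => if excluded_middle_informative (phi b = Some a) then true else false).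
    set (rest := filter (fun b => negb (p b)) l').
    assert (Erest : filter (fun b => negb (p b)) (b0 :: l') = rest).
    { simpl. unfold p at 1. destruct excluded_middle_informative; [reflexivity | congruence]. }
    assert (Hlen : (length rest < length (b0 :: l'))%nat).
    { pose proof (filter_length_le (fun b => negb (p b)) l'). unfold rest; simpl; lia. }
    destruct (IH (length rest) Hlen rest eq_refl) as [As [HA1 [HA2 HA3]]].
    { apply NoDup_filter; auto. }
    assert (Hfibre : forall b, In b (filter p (b0 :: l')) -> phi b = Some a).
    { intros b Hb; apply filter_In in Hb as [_ Hb]; unfold p in Hb.
      destruct excluded_middle_informative; congruence. }
    exists (a :: As). split; [|split].
    + constructor; auto. intros Hin. destruct (HA2 a Hin) as [b [Hb1 Hb2]].
      apply filter_In in Hb1 as [_ Hb1]. unfold p in Hb1.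
      destruct excluded_middle_informative; simpl in Hb1; congruence.
    + intros a' [<-|Ha']; [exists b0; simpl; auto|].
      destruct (HA2 a' Ha') as [b [Hb1 Hb2]]. exists b; split; auto.
      apply filter_In in Hb1; simpl; tauto.
    + rewrite (fibre_total_filter p), Erest.
      assert (fibre_total (filter p (b0 :: l')) <= INR N * v a).
      { rewrite (fibre_total_const a) by auto. apply Rmult_le_compat_r; auto.
        apply le_INR, (HN a); auto. apply NoDup_filter; auto. }
      change (fold_right (fun a0 acc => v a0 + acc) 0 (a :: As))
        with (v a + fold_right (fun a0 acc => v a0 + acc) 0 As). lra.
  - destruct (IH (length l') ltac:(simpl; lia) l' eq_refl Hl') as [As [HA1 [HA2 HA3]]].
    exists As; split; auto; split.
    + intros a Ha; destruct (HA2 a Ha) as [b [? ?]]; exists b; simpl; auto.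
    + change (fibre_total (b0 :: l')) with (fibre_val b0 + fibre_total l').
      unfold fibre_val at 1; rewrite Eb. lra.
Qed.

End FibreSums.

Lemma ptrans_bounded {A B} (phi : B -> option A) (w : B -> C) M N : 0 <= M ->
  (forall b, Cnorm2 (w b) <= M) ->
  (forall a l, NoDup l -> (forall b, In b l -> phi b = Some a) -> (length l <= N)%nat) ->
  BoundedOp (ptrans phi w).
Proof.
  intros HM Hw HN. pose proof (pos_INR N).
  assert (Hb : forall g, InL2 g -> forall l, NoDup l -> psum (ptrans phi w g) l <= M * INR N * norm2 g).
  { intros g Hg l Hl.
    destruct (fibre_sum phi (fun a => Cnorm2 (g a)) N (fun a => Cnorm2_ge0 _) HN l Hl)
      as [As [HA1 [_ HA3]]].
    change (fold_right (fun a acc => Cnorm2 (g a) + acc) 0 As) with (psum g As) in HA3.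
    pose proof (psum_le_norm2 g As Hg HA1).
    assert (psum (ptrans phi w g) l
            <= M * fibre_total phi (fun a => Cnorm2 (g a)) l).
    { clear -Hw HM. induction l as [|b l IH]; simpl; [lra|].
      unfold ptrans at 1, fibre_total, fibre_val at 1; fold (fibre_total phi (fun a => Cnorm2 (g a)) l).
      destruct (phi b) as [a|].
      - rewrite Cnorm2_mul. pose proof (Hw b). pose proof (Cnorm2_ge0 (g a)). nra.
      - rewrite Cnorm2_C0. lra. }
    assert (INR N * psum g As <= INR N * norm2 g) by (apply Rmult_le_compat_l; auto).
    assert (M * (INR N * psum g As) <= M * (INR N * norm2 g)) by (apply Rmult_le_compat_l; auto).
    nra. }
  assert (HL : forall g, InL2 g -> InL2 (ptrans phi w g)) by (intros g Hg; exists (M * INR N * norm2 g); auto).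
  split; [auto | split; [|split]].
  - intros f g _ _ y. unfold ptrans. destruct (phi y); [C_ring | rewrite Cadd_0l; auto].
  - intros c f _ y. unfold ptrans. destruct (phi y); [C_ring | rewrite Cmul_0r; auto].
  - exists (M * INR N). split; [nra|]. intros f Hf. apply norm2_le; auto.
Qed.

(** A partial translation moving points by less than [L] (for [rho] in [D(A, B)], with
    [B] of bounded geometry) with bounded weights lies in [M_rho(A, B)]: its fibres have
    diameter at most [2L]. *)
Lemma ptrans_in_Mrho {A B} (dA : A -> A -> R) (dB : B -> B -> R) rho
  (phi : B -> option A) (w : B -> C) (L M : R) :
  InD dA dB rho -> BoundedGeometry dB -> 0 < L -> 0 <= M ->
  (forall b, Cnorm2 (w b) <= M) ->
  (forall a b, phi b = Some a -> rho (inl a) (inr b) < L) ->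
  Mrho rho (ptrans phi w).
Proof.
  intros [[_ [_ [Hsym Htri]]] [_ HB]] HG HL HM Hw Hphi.
  destruct (bounded_diameter dB HG (2 * L)) as [N HN]; [lra|].
  assert (Hbd : BoundedOp (ptrans phi w)).
  { apply (ptrans_bounded phi w M N); auto. intros a l Hl Hfib. apply HN; auto.
    intros b b' Hb Hb'. rewrite <- HB.
    pose proof (Htri (inr b) (inl a) (inr b')). rewrite (Hsym (inr b) (inl a)) in *.
    pose proof (Hphi a b (Hfib b Hb)). pose proof (Hphi a b' (Hfib b' Hb')). lra. }
  apply Mrho_iff. split; auto. apply approximable_self. split; auto.
  exists L. intros a b Hab. unfold coef, ptrans. destruct (phi b) as [a'|] eqn:Eb; auto.
  unfold delta. destruct excluded_middle_informative as [<-|]; [|apply Cmul_0r].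
  specialize (Hphi a b Eb). lra.
Qed.

(** * Finite-propagation operators factor through [Y]

    Given [S] of propagation less than [L] for [dYZ o dXY], every pair [(x, z)] with
    [S_{zx} <> 0] is joined by a path [x -> y -> z] of length less than [L].  Enumerate
    the points [x] near [z] as [x_0(z), ..., x_{N1-1}(z)] and the points [x] near [y] as
    [x_0(y), ..., x_{N2-1}(y)].  Then [S = sum_{k,j} P_{kj} o Q_j] where
    [Q_j g (y) = g (x_j(y))] moves points of [X] to [Y], and [P_{kj}] sends the value at
    the midpoint [y] of [x_k(z)] and [z] to [z], with weight [S_{z x_k(z)}], provided
    [x_k(z) = x_j(y)].  All these partial translations move points by less than [L]. *)

Lemma csum_seq_nth {A} (H : A -> C) (l : list A) N : (length l <= N)%nat ->
  csum (seq 0 N) (fun k => match nth_error l k with Some x => H x | None => C0 end) = csum l H.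
Proof.
  revert N; induction l as [|a l IH]; intros N HN; simpl.
  - apply csum_zero. intros [|k] _; reflexivity.
  - destruct N as [|N]; simpl in HN; [lia|]. simpl.
    rewrite <- seq_shift, csum_map. cbn [nth_error]. rewrite (IH N); auto; lia.
Qed.

Lemma csum_indicator {A} (l : list A) x v : NoDup l -> In x l ->
  csum l (fun x' => if excluded_middle_informative (x' = x) then v else C0) = v.
Proof.
  induction 1 as [|a l Ha Hl IH]; simpl; [tauto|]. intros [->|Hx].
  - destruct excluded_middle_informative; [|congruence].
    rewrite csum_zero, Cadd_0r; auto. intros b Hb. destruct excluded_middle_informative; congruence.
  - destruct excluded_middle_informative; [subst; tauto|]. rewrite Cadd_0l; auto.
Qed.

Lemma InD_left_close {A B} (dA : A -> A -> R) (dB : B -> B -> R) rho a a' b L :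
  InD dA dB rho -> rho (inl a) (inr b) < L -> rho (inl a') (inr b) < L -> dA a a' <= 2 * L.
Proof.
  intros [[_ [_ [Hsym Htri]]] [HA _]] H1 H2. rewrite <- HA.
  pose proof (Htri (inl a) (inr b) (inl a')). rewrite (Hsym (inr b) (inl a')) in *. lra.
Qed.

Lemma composite_close {X Y Z} (dX : X -> X -> R) (dY : Y -> Y -> R) (dZ : Z -> Z -> R) dXY dYZ
  x x' y y' z L : InD dX dY dXY -> InD dY dZ dYZ ->
  dXY (inl x) (inr y) + dYZ (inl y) (inr z) < L ->
  dXY (inl x') (inr y') + dYZ (inl y') (inr z) < L -> dX x x' <= 2 * L.
Proof.
  intros [[_ [_ [Hs Ht]]] [H1 H2]] [[Hn' [_ [Hs' Ht']]] [H1' _]] Hy Hy'. rewrite <- H1.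
  pose proof (Ht (inl x) (inr y) (inl x')). pose proof (Ht (inr y) (inr y') (inl x')).
  pose proof (Ht' (inl y) (inr z) (inl y')).
  rewrite H2, <- H1' in *. rewrite (Hs (inr y') (inl x')), (Hs' (inr z) (inl y')) in *. lra.
Qed.

Section Decomposition.
Context {X Y Z : Type} (dX : X -> X -> R) (dY : Y -> Y -> R) (dZ : Z -> Z -> R)
  (dXY : (X + Y) -> (X + Y) -> R) (dYZ : (Y + Z) -> (Y + Z) -> R).
Hypotheses (hY : BoundedGeometry dY) (hZ : BoundedGeometry dZ)
  (hXY : InD dX dY dXY) (hYZ : InD dY dZ dYZ) (hYne : inhabited Y).
Variable L : R.
Hypothesis HL : 0 < L.

Definition near (z : Z) (x : X) : Prop :=
  exists y, dXY (inl x) (inr y) + dYZ (inl y) (inr z) < L.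

Definition midpoint (x : X) (z : Z) : Y :=
  epsilon hYne (fun y => dXY (inl x) (inr y) + dYZ (inl y) (inr z) < L).

Lemma midpoint_spec x z : near z x ->
  dXY (inl x) (inr (midpoint x z)) + dYZ (inl (midpoint x z)) (inr z) < L.
Proof. intros H. unfold midpoint. apply epsilon_spec. exact H. Qed.

Lemma midpoint_lower x z : near z x -> dXY (inl x) (inr (midpoint x z)) < L.
Proof.
  intros H. pose proof (midpoint_spec x z H).
  destruct hYZ as [[Hn _] _]. specialize (Hn (inl (midpoint x z)) (inr z)). lra.
Qed.

Lemma midpoint_upper x z : near z x -> dYZ (inl (midpoint x z)) (inr z) < L.
Proof.
  intros H. pose proof (midpoint_spec x z H).
  destruct hXY as [[Hn _] _]. specialize (Hn (inl x) (inr (midpoint x z))). lra.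
Qed.

Variables N1 N2 : nat.
Hypothesis HN1 : forall z l, NoDup l -> (forall x, In x l -> near z x) -> (length l <= N1)%nat.
Hypothesis HN2 : forall y l, NoDup l -> (forall x, In x l -> dXY (inl x) (inr y) < L) ->
  (length l <= N2)%nat.

Definition near_enum (z : Z) : list X := enum (near z).
Definition ball_enum (y : Y) : list X := enum (fun x => dXY (inl x) (inr y) < L).

Lemma near_enum_spec z :
  NoDup (near_enum z) /\ (forall x, In x (near_enum z) <-> near z x) /\ (length (near_enum z) <= N1)%nat.
Proof. apply enum_spec. apply HN1. Qed.

Lemma ball_enum_spec y : NoDup (ball_enum y) /\
  (forall x, In x (ball_enum y) <-> dXY (inl x) (inr y) < L) /\ (length (ball_enum y) <= N2)%nat.
Proof. apply enum_spec. apply HN2. Qed.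

Lemma in_near_enum z x : In x (near_enum z) <-> near z x.
Proof. apply near_enum_spec. Qed.

Lemma in_ball_enum y x : In x (ball_enum y) <-> dXY (inl x) (inr y) < L.
Proof. apply ball_enum_spec. Qed.

Definition lift_op (j : nat) : Op X Y := ptrans (fun y => nth_error (ball_enum y) j) (fun _ => C1).

Definition route (k j : nat) (z : Z) : option Y :=
  match nth_error (near_enum z) k with
  | Some x => if excluded_middle_informative (nth_error (ball_enum (midpoint x z)) j = Some x)
              then Some (midpoint x z) else None
  | None => None
  end.

Variable S : Op X Z.
Hypothesis HS : BoundedOp S.

Definition weight (k : nat) (z : Z) : C :=
  match nth_error (near_enum z) k with Some x => coef S x z | None => C0 end.

Definition push_op (k j : nat) : Op Y Z := ptrans (route k j) (weight k).

Definition decomposition : list (C * Op X Y * Op Y Z) :=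
  flat_map (fun k => map (fun j => (C1, lift_op j, push_op k j)) (seq 0 N2)) (seq 0 N1).

Lemma lift_op_in_Mrho j : Mrho dXY (lift_op j).
Proof.
  apply (ptrans_in_Mrho dX dY _ _ _ L 1); auto; [lra | intros; rewrite Cnorm2_C1; lra |].
  intros x y Hx. apply in_ball_enum, (nth_error_In _ j Hx).
Qed.

Lemma push_op_in_Mrho k j : Mrho dYZ (push_op k j).
Proof.
  destruct (coef_bounded S HS) as [K [HK HK']].
  apply (ptrans_in_Mrho dY dZ _ _ _ L K); auto.
  - intros z. unfold weight. destruct (nth_error (near_enum z) k); auto. rewrite Cnorm2_C0; auto.
  - intros y z. unfold route. destruct (nth_error (near_enum z) k) as [x|] eqn:Ex; [|discriminate].
    destruct excluded_middle_informative; [|discriminate]. intros Hy; injection Hy as <-.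
    apply midpoint_upper, in_near_enum, (nth_error_In _ k Ex).
Qed.

Lemma decomposition_terms c T S' : In (c, T, S') decomposition -> Mrho dXY T /\ Mrho dYZ S'.
Proof.
  unfold decomposition. intros Hin. apply in_flat_map in Hin as [k [_ Hin]].
  apply in_map_iff in Hin as [j [Ej _]]. injection Ej as <- <- <-.
  split; [apply lift_op_in_Mrho | apply push_op_in_Mrho].
Qed.

(** For each [k], the sum over [j] picks exactly the index of [x_k(z)] in the ball
    around the midpoint. *)
Lemma push_lift_sum k f z : InL2 f ->
  csum (seq 0 N2) (fun j => push_op k j (lift_op j f) z) =
  match nth_error (near_enum z) k with Some x => Cmul (f x) (coef S x z) | None => C0 end.
Proof.
  intros Hf. unfold push_op, ptrans at 1, route, weight.
  destruct (nth_error (near_enum z) k) as [x|] eqn:Ex; [|apply csum_zero; auto].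
  set (m := midpoint x z).
  assert (Hx : In x (ball_enum m)).
  { apply ball_enum_spec, midpoint_lower, in_near_enum, (nth_error_In _ k Ex). }
  destruct (ball_enum_spec m) as [Hnd [_ Hlen]].
  rewrite (csum_ext _ _ (fun j => match nth_error (ball_enum m) j with
     | Some x' => if excluded_middle_informative (x' = x) then Cmul (f x) (coef S x z) else C0
     | None => C0 end)).
  - rewrite csum_seq_nth by auto. apply csum_indicator; auto.
  - intros j _. unfold lift_op, ptrans.
    destruct excluded_middle_informative as [Ej|Ej].
    + rewrite Ej. destruct excluded_middle_informative; [|congruence]. C_ring.
    + destruct (nth_error (ball_enum m) j) as [x'|]; auto.
      destruct excluded_middle_informative; [subst; congruence | auto].
Qed.

(** The decomposition reproduces [S]: summing over [j] and then [k] gives the matrix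
    expression of [S g z] over the points near [z], which contain the support of the
    column [z] by the propagation bound. *)
Lemma decomposition_sum f z : PropLess (comp_metric dX dZ dXY dYZ) S L -> InL2 f ->
  S f z = span_op decomposition f z.
Proof.
  intros HSL Hf.
  change (S f z = csum decomposition (fun p => Cmul (fst (fst p)) ((snd p) ((snd (fst p)) f) z))).
  unfold decomposition. rewrite csum_flat_map.
  rewrite (csum_ext _ _ (fun k => match nth_error (near_enum z) k with
                                   | Some x => Cmul (f x) (coef S x z) | None => C0 end)).
  - destruct (near_enum_spec z) as [Hnd [Hin Hlen]].
    rewrite csum_seq_nth by auto. apply bop_matrix; auto.
    intros x Hx. apply Hin.
    destruct (Rlt_or_le (comp_metric dX dZ dXY dYZ (inl x) (inr z)) L) as [Hlt|Hge].
    + apply (comp_metric_lt dX dY dZ dXY dYZ hXY hYZ hYne x z L Hlt).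
    + exfalso. apply Hx, HSL. lra.
  - intros k _. rewrite csum_map, <- push_lift_sum by auto.
    apply csum_ext. intros j _. simpl. apply Cmul_1l.
Qed.

End Decomposition.

Lemma FPB_decomposes {X Y Z} (dX : X -> X -> R) (dY : Y -> Y -> R) (dZ : Z -> Z -> R)
  (dXY : (X + Y) -> (X + Y) -> R) (dYZ : (Y + Z) -> (Y + Z) -> R) :
  BoundedGeometry dX -> BoundedGeometry dY -> BoundedGeometry dZ ->
  InD dX dY dXY -> InD dY dZ dYZ -> inhabited Y ->
  forall S, FPB (comp_metric dX dZ dXY dYZ) S ->
  exists l, (forall c T S', In (c, T, S') l -> Mrho dXY T /\ Mrho dYZ S') /\
    forall f, InL2 f -> forall z, S f z = span_op l f z.
Proof.
  intros hX hY hZ hXY hYZ hYne S [HS [L0 HL0]].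
  set (L := Rmax L0 1).
  assert (HL : 0 < L) by (unfold L; pose proof (Rmax_r L0 1); lra).
  assert (HSL : PropLess (comp_metric dX dZ dXY dYZ) S L).
  { intros x z H. apply HL0. pose proof (Rmax_l L0 1). unfold L in H. lra. }
  destruct (bounded_diameter dX hX (2 * L)) as [N HN]; [lra|].
  assert (HN1 : forall z l, NoDup l -> (forall x, In x l -> near dXY dYZ L z x) -> (length l <= N)%nat).
  { intros z l Hl Hnear. apply HN; auto. intros x x' Hx Hx'.
    destruct (Hnear x Hx) as [y Hy]. destruct (Hnear x' Hx') as [y' Hy'].
    apply (composite_close dX dY dZ dXY dYZ x x' y y' z); auto. }
  assert (HN2 : forall y l, NoDup l -> (forall x, In x l -> dXY (inl x) (inr y) < L) ->
                 (length l <= N)%nat).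
  { intros y l Hl Hball. apply HN; auto. intros x x' Hx Hx'.
    apply (InD_left_close dX dY dXY x x' y); auto. }
  exists (decomposition dXY dYZ hYne L N N S). split.
  - apply (decomposition_terms dX dY dZ); auto.
  - intros f Hf z. apply (decomposition_sum dX dY dZ); auto.
Qed.

(** Main theorem: the two inclusions above, transported through the characterisation
    of norm closures by approximability. *)
Theorem mainTheorem7 (X Y Z : Type)
  (dX : X -> X -> R) (dY : Y -> Y -> R) (dZ : Z -> Z -> R)
  (hX : CountableDiscreteBG dX) (hY : CountableDiscreteBG dY) (hZ : CountableDiscreteBG dZ)
  (hYne : inhabited Y)
  (dXY : (X + Y) -> (X + Y) -> R) (dYZ : (Y + Z) -> (Y + Z) -> R)
  (hXY : InD dX dY dXY) (hYZ : InD dY dZ dYZ) :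
  forall U : Op X Z,
    HatTensor (Mrho dXY) (Mrho dYZ) U <-> Mrho (comp_metric dX dZ dXY dYZ) U.
Proof.
  intros U.
  destruct hX as [_ [_ [_ bX]]], hY as [_ [_ [_ bY]]], hZ as [_ [_ [_ bZ]]].
  split.
  - apply (tensor_in_Mrho dX dY dZ); auto.
  - intros HU. apply Mrho_iff in HU as [HU Ha]. apply OpClosure_iff. split; auto.
    apply (approximable_mono _ _ U (FPB_decomposes dX dY dZ dXY dYZ bX bY bZ hXY hYZ hYne)), Ha.
Qed.
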